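(* Let $X$ be a Hausdorff $k$-space and $A$ a full unital subalgebra of $C(X)$; when $\mathbb{K}=\mathbb{C}$ assume moreover that $A$ is self-adjoint ($f\in A\Rightarrow\overline f\in A$). Let $\tau$ be a locally convex topology on $A$ making the inclusion $(A,\tau)\hookrightarrow C(X)$ continuous, and let $\chi_c(A)$ be the set of $\tau$-continuous characters (unital multiplicative linear functionals) of $A$ with the subspace topology of $A'_c$, i.e. the topology of uniform convergence on precompact subsets of $(A,\tau)$. If $A_{[0,1]}$ separates compact sets and closed sets in $X$, then the map $\delta:X\to\chi_c(A)$, $x\mapsto\delta_x$ ($\delta_x(f)=f(x)$) is well defined and is a homeomorphism onto its image. If in addition $\tau$ is compactly localized, then $\delta$ is surjective, hence a homeomorphism $X\to\chi_c(A)$.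
   Context: A Hausdorff space is a $k$-space if every subset meeting each compact set in a relatively closed set is closed. $C(X)$ is the algebra of continuous scalar functions with the topology of uniform convergence on compact sets. A unital subalgebra $A\subseteq C(X)$ is full if whenever $f\in A$ is invertible in $C(X)$ (i.e. vanishes nowhere), $f^{-1}\in A$. $A_{[0,1]}=\{f\in A: f(x)\in[0,1]\ \forall x\in X\}$. $A_{[0,1]}$ separates compact sets and closed sets if for every compact $K$ and closed $C$ with $K\cap C=\emptyset$ there is $f\in A_{[0,1]}$ with $f|_K=1$ and $f|_C=0$. A locally convex topology $\tau$ on a subspace $A\subseteq C(X)$ is compactly localized if for every $\tau$-continuous seminorm $q$ on $A$ there is a compact $K\subseteq X$ such that $q(f)=0$ for all $f\in A$ with $f|_K=0$. *)

(* Scalars: K : numFieldType (instantiated with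
   K = R and K = R[i] for R : realType). *)
From mathcomp Require Import all_boot all_order all_algebra.
From mathcomp Require Import all_classical all_reals all_analysis.
From mathcomp Require Export complex.
Import numFieldNormedType.Exports.
Set Implicit Arguments. Unset Strict Implicit. Unset Printing Implicit Defensive.
Import Order.TTheory GRing.Theory Num.Theory.
Local Open Scope classical_set_scope.
Local Open Scope ring_scope.

Section Defs.
Context {X : topologicalType} {K : numFieldType}.

Definition k_space : Prop :=
  forall F : set X,
    (forall Kc : set X, compact Kc ->
       exists C : set X, closed C /\ F `&` Kc = C `&` Kc) ->
    closed F.

Definition unital_subalgebra (A : set (X -> K)) : Prop :=
  [/\ (forall f, A f -> continuous f),
      A (fun _ => 1),
      (forall f g, A f -> A g -> A (fun x => f x + g x)),
      (forall (a : K) f, A f -> A (fun x => a * f x)) &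
      (forall f g, A f -> A g -> A (fun x => f x * g x))].

Definition full (A : set (X -> K)) : Prop :=
  forall f, A f -> (forall x, f x != 0) -> A (fun x => (f x)^-1).

Definition self_adjoint (conj : K -> K) (A : set (X -> K)) : Prop :=
  forall f, A f -> A (fun x => conj (f x)).

(* q is a seminorm on the subspace A (only its values on A matter) *)
Definition seminorm_on (A : set (X -> K)) (q : (X -> K) -> K) : Prop :=
  [/\ (forall f, A f -> 0 <= q f),
      (forall f g, A f -> A g -> q (fun x => f x + g x) <= q f + q g) &
      (forall (a : K) f, A f -> q (fun x => a * f x) = `|a| * q f)].

(* The locally convex topology tau on A is the one generated by a family
   S of seminorms on A.  A function r on A is tau-bounded if it is dominated
   by a multiple of a finite sum of seminorms of S. *)
Definition tau_bounded (A : set (X -> K)) (S : set ((X -> K) -> K))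
    (r : (X -> K) -> K) : Prop :=
  exists (n : nat) (ps : 'I_n -> (X -> K) -> K) (C : K),
    (forall i, S (ps i)) /\
    forall f, A f -> r f <= C * \sum_(i < n) ps i f.

Definition tau_continuous_seminorm A S (q : (X -> K) -> K) : Prop :=
  seminorm_on A q /\ tau_bounded A S q.

(* continuity of the inclusion (A, tau) -> C(X), C(X) carrying the
   topology of uniform convergence on compact sets *)
Definition inclusion_continuous A S : Prop :=
  forall Kc : set X, compact Kc ->
    exists (n : nat) (ps : 'I_n -> (X -> K) -> K) (C : K),
      (forall i, S (ps i)) /\
      forall f, A f -> forall x, Kc x -> `|f x| <= C * \sum_(i < n) ps i f.

Definition continuous_character A S (phi : (X -> K) -> K) : Prop :=
  [/\ (forall f g, A f -> A g -> phi (fun x => f x + g x) = phi f + phi g),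
      (forall (a : K) f, A f -> phi (fun x => a * f x) = a * phi f),
      (forall f g, A f -> A g -> phi (fun x => f x * g x) = phi f * phi g),
      phi (fun _ => 1) = 1 &
      tau_bounded A S (fun f => `|phi f|)].

Definition precompact A S (B : set (X -> K)) : Prop :=
  B `<=` A /\
  forall q, tau_continuous_seminorm A S q ->
  forall eps : K, 0 < eps ->
    exists (n : nat) (c : 'I_n -> X -> K),
      (forall i, A (c i)) /\
      forall f, B f -> exists i, q (fun x => f x - c i x) < eps.

(* open sets of A'_c : topology of uniform convergence on precompact subsets
   of (A, tau); the topology of chi_c(A) is the induced one. *)
Definition Ac_open A S (O : set ((X -> K) -> K)) : Prop :=
  forall phi, O phi ->
    exists (B : set (X -> K)) (eps : K),
      [/\ precompact A S B, 0 < eps &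
          forall psi, (forall f, B f -> `|psi f - phi f| < eps) -> O psi].

Definition separates_compact_closed (A : set (X -> K)) : Prop :=
  forall Kc C : set X, compact Kc -> closed C -> Kc `&` C = set0 ->
    exists f, [/\ A f, (forall x, 0 <= f x <= 1),
                  (forall x, Kc x -> f x = 1) & (forall x, C x -> f x = 0)].

Definition compactly_localized A S : Prop :=
  forall q, tau_continuous_seminorm A S q ->
    exists Kc : set X, compact Kc /\
      forall f, A f -> (forall x, Kc x -> f x = 0) -> q f = 0.

Definition delta (x : X) : (X -> K) -> K := fun f => f x.

End Defs.

Definition theorem6p13_for (K : numFieldType) (conj : K -> K) : Prop :=
  forall (X : topologicalType) (A : set (X -> K)) (S : set ((X -> K) -> K)),
    hausdorff_space X -> @k_space X ->
    unital_subalgebra A -> full A -> self_adjoint conj A ->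
    (forall p, S p -> seminorm_on A p) ->
    inclusion_continuous A S ->
    separates_compact_closed A ->
    [/\
        (forall x : X, continuous_character A S (delta x)),
        (forall x y : X, (forall f, A f -> delta x f = delta y f) -> x = y),
        (forall O, Ac_open A S O -> open (@delta X K @^-1` O)),
        (* delta is open onto its image *)
        (forall U : set X, open U ->
           exists O, Ac_open A S O /\ @delta X K @^-1` O = U) &
        (compactly_localized A S ->
           forall phi, continuous_character A S phi ->
             exists x : X, forall f, A f -> phi f = delta x f)].

From mathcomp Require Import all_boot all_order all_algebra.
From mathcomp Require Import all_classical all_reals all_analysis.
From mathcomp Require Import complex ring.
(* Imported last so that [Defs.precompact] shadows the library's [precompact]. *)
From Pilot Require Import Defs.
Import numFieldNormedType.Exports.
Set Implicit Arguments.
Unset Strict Implicit.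
Unset Printing Implicit Defensive.
Import Order.TTheory GRing.Theory Num.Theory.
Local Open Scope classical_set_scope.
Local Open Scope ring_scope.

(* Continuity of the inclusion bounds the sup norm on a compact set by a
   tau-continuous seminorm, so precompact subsets of (A, tau) are
   equicontinuous on compact sets: delta is continuous on every compact set,
   hence continuous because X is a k-space.  Functions of A_[0,1] equal to 1
   at a point and vanishing off an open set U give open sets
   {psi | |psi f - 1| < 1} of A'_c whose union pulls back to exactly U.
   Finally, a continuous character phi only sees a compact set Kc.  If phi
   were no point evaluation, every x would carry some h = g conj(g) in
   ker phi with h x <> 0; compactness of Kc yields one such H nonvanishing
   on Kc, and H + (1 - e), with e = 1 on Kc and e = 0 where H = 0, is an
   invertible element of ker phi. *)

Lemma closed_zero_set (X : topologicalType) (K : numFieldType) (f : X -> K) :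
  continuous f -> closed [set x | f x = 0].
Proof.
move=> fc; apply: (@preimage_closed _ _ f [set 0]) => [x _|]; first exact: fc.
exact: compact_closed (@norm_hausdorff _ _) (@compact_set1 _ 0).
Qed.

Lemma compact_common_zero (X : topologicalType) (K : numFieldType)
    (C : set (X -> K)) (Kc : set X) :
  compact Kc -> C (fun _ => 0) ->
  (forall f g, C f -> C g -> C (fun x => f x + g x)) ->
  (forall f, C f -> continuous f) -> (forall f, C f -> forall x, 0 <= f x) ->
  (forall f, C f -> exists2 x, Kc x & f x = 0) ->
  exists2 x, Kc x & forall f, C f -> f x = 0.
Proof.
move=> cK C0 CD Ccont Cge0 Czero.
pose Z (f : X -> K) := Kc `&` [set x | f x = 0].
(* Nonnegativity gives Z (f + g) = Z f `&` Z g, so the Z f form a filter base. *)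
have ZD f g : C f -> C g -> Z (fun x => f x + g x) `<=` Z f `&` Z g.
  move=> Cf Cg x [Kx /eqP]; rewrite paddr_eq0 ?Cge0 //.
  by move=> /andP[/eqP fx0 /eqP gx0].
have FZ : Filter (filter_from C Z).
  apply: filter_from_filter; first by exists (fun _ : X => (0 : K)).
  by move=> f g Cf Cg; exists (fun x => f x + g x); [exact: CD | exact: ZD].
have PZ : ProperFilter (filter_from C Z).
  by apply: filter_from_proper => f /Czero [x Kx fx0]; exists x.
have [|x [Kx clx]] := cK _ PZ; first by exists (fun _ : X => (0 : K)) => // x [].
exists x => // f Cf; rewrite clusterE in clx.
suff : closure [set y | f y = 0] x.
  by rewrite -(closure_id _).1 //; exact: closed_zero_set (Ccont f Cf).
by apply: closureS (clx (Z f) _) => [y []|]; last by exists f.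
Qed.

Section Subalgebra.
Context {X : topologicalType} {K : numFieldType} (A : set (X -> K)).
Hypothesis hA : unital_subalgebra A.

Lemma unital_subalgebra_cst (a : K) : A (fun _ => a).
Proof.
case: hA => _ A1 _ AZ _.
have -> : (fun _ : X => a) = (fun x => a * (fun _ => 1) x).
  by apply: funext => x; rewrite mulr1.
exact: AZ.
Qed.

Lemma unital_subalgebra_sub f g : A f -> A g -> A (fun x => f x - g x).
Proof.
case: hA => _ _ AD AZ _ Af Ag.
have -> : (fun x => f x - g x) = (fun x => f x + (fun x => -1 * g x) x).
  by apply: funext => x; rewrite mulN1r.
by apply: AD => //; apply: AZ.
Qed.

End Subalgebra.

Section Character.
Context {X : topologicalType} {K : numFieldType} (A : set (X -> K)).
Variables (S : set ((X -> K) -> K)) (phi : (X -> K) -> K).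
Hypothesis hA : unital_subalgebra A.
Hypothesis hphi : continuous_character A S phi.

Lemma character_cst (a : K) : phi (fun _ => a) = a.
Proof.
case: hA => _ A1 _ _ _; case: hphi => _ phiZ _ phi1 _.
have -> : (fun _ : X => a) = (fun x => a * (fun _ => 1) x).
  by apply: funext => x; rewrite mulr1.
by rewrite phiZ // phi1 mulr1.
Qed.

Lemma character_sub f g : A f -> A g -> phi (fun x => f x - g x) = phi f - phi g.
Proof.
case: hA => _ _ _ AZ _; case: hphi => phiD phiZ _ _ _ Af Ag.
have -> : (fun x => f x - g x) = (fun x => f x + (fun x => -1 * g x) x).
  by apply: funext => x; rewrite mulN1r.
by rewrite phiD ?phiZ ?mulN1r //; apply: AZ.
Qed.

Lemma character_norm_tau_continuous :
  tau_continuous_seminorm A S (fun f => `|phi f|).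
Proof.
case: hphi => phiD phiZ _ _ phib; split=> //; split=> //.
- by move=> f g Af Ag; rewrite phiD //; exact: ler_normD.
- by move=> a f Af; rewrite phiZ // normrM.
Qed.

Lemma character_kernel_has_zero k : full A -> A k -> phi k = 0 -> exists x, k x = 0.
Proof.
move=> hfull Ak phik0; apply: contrapT => /forallNP k_neq0.
have Akinv : A (fun x => (k x)^-1) by apply: hfull => // x; apply/eqP.
case: hphi => _ _ phiM phi1 _.
have : phi (fun _ => 1) = phi k * phi (fun x => (k x)^-1).
  by rewrite -phiM //; congr phi; apply: funext => x; rewrite mulfV //; apply/eqP.
by rewrite phi1 phik0 mul0r => /eqP; rewrite oner_eq0.
Qed.

End Character.

Section DeltaMap.
Context {X : topologicalType} {K : numFieldType}.
Variables (A : set (X -> K)) (S : set ((X -> K) -> K)).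
Hypothesis S_seminorm : forall p, S p -> seminorm_on A p.
Hypothesis hinc : inclusion_continuous A S.

Lemma sum_seminorm_tau_continuous n (ps : 'I_n -> (X -> K) -> K) (C : K) :
  (forall i, S (ps i)) ->
  tau_continuous_seminorm A S (fun f => `|C| * \sum_(i < n) ps i f).
Proof.
move=> Sps; have ps_semi i := S_seminorm (Sps i).
split; last by exists n, ps, `|C|.
split.
- move=> f Af; rewrite mulr_ge0 // sumr_ge0 // => i _.
  by case: (ps_semi i) => + _ _; apply.
- move=> f g Af Ag; rewrite -mulrDr -big_split /= ler_wpM2l //.
  by apply: ler_sum => i _; case: (ps_semi i) => _ + _; apply.
- move=> a f Af; rewrite (eq_bigr (fun i => `|a| * ps i f)) => [|i _].
    by rewrite -mulr_sumr mulrCA.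
  by case: (ps_semi i) => _ _ ->.
Qed.

Lemma inclusion_continuous_seminorm (Kc : set X) : compact Kc ->
  exists2 q, tau_continuous_seminorm A S q &
    forall f, A f -> forall x, Kc x -> `|f x| <= q f.
Proof.
move=> cK; have [n [ps [C [Sps bound]]]] := hinc cK.
exists (fun f => `|C| * \sum_(i < n) ps i f).
  exact: sum_seminorm_tau_continuous.
move=> f Af x Kx; have fx_le := bound f Af x Kx.
have sum_ge0 : 0 <= \sum_(i < n) ps i f.
  by apply: sumr_ge0 => i _; case: (S_seminorm (Sps i)) => + _ _; apply.
rewrite -(ger0_norm sum_ge0) -normrM ger0_norm //.
exact: le_trans fx_le.
Qed.

Hypothesis hA : unital_subalgebra A.

Lemma precompact_equicontinuous_on_compact (Kc : set X) (B : set (X -> K)) z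
    (eps : K) :
  compact Kc -> precompact A S B -> Kc z -> 0 < eps ->
  \forall y \near z, Kc y -> forall f, B f -> `|f y - f z| < eps.
Proof.
move=> cK [BA totB] Kz eps_gt0.
have [q q_semi q_bound] := inclusion_continuous_seminorm cK.
pose d := eps / 3%:R; have d_gt0 : 0 < d by rewrite divr_gt0 // ltr0n.
have [m [c [Ac near_c]]] := totB q q_semi d d_gt0.
have Acont : forall f, A f -> continuous f by case: hA.
have : \forall y \near z, forall i, `|c i z - c i y| < d.
  apply: filter_forall => i; apply: cvgr_dist_lt => //.
  exact: Acont _ (Ac i) z.
apply: filter_app; near=> y => c_near Ky f Bf.
have [i f_ci] := near_c f Bf.
have Afc : A (fun x => f x - c i x) := unital_subalgebra_sub hA (BA _ Bf) (Ac i).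
have fy := le_lt_trans (q_bound _ Afc y Ky) f_ci.
have fz := le_lt_trans (q_bound _ Afc z Kz) f_ci.
have -> : f y - f z = (f y - c i y) + (c i y - c i z) - (f z - c i z) by ring.
have -> : eps = d + d + d by rewrite /d; field.
rewrite (le_lt_trans (ler_normB _ _)) // ltrD // (le_lt_trans (ler_normD _ _)) //.
by rewrite ltrD // distrC.
Unshelve. all: by end_near.
Qed.

Lemma delta_continuous : @k_space X ->
  forall O, Ac_open A S O -> open (@delta X K @^-1` O).
Proof.
move=> hk O hO; set P := @delta X K @^-1` O.
rewrite -closedC; apply: hk => Kc cK.
exists (closure (~` P `&` Kc)); split; first exact: closed_closure.
apply/seteqP; split=> [z [nPz Kz]|z [clz Kz]]; first by split=> //; apply: subset_closure.
split=> // Pz; have [B [eps [pB eps_gt0 hO']]] := hO _ Pz.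
have near_z := precompact_equicontinuous_on_compact cK pB Kz eps_gt0.
have [y [[nPy Ky] By]] := clz _ near_z.
by apply: nPy; apply: hO' => f Bf; apply: By.
Qed.

Lemma precompact_set1 f : A f -> precompact A S [set f].
Proof.
move=> Af; split=> [g -> //|q [[_ _ qZ] _] eps eps_gt0].
exists 1%N, (fun _ => f); split=> // g ->; exists ord0.
have -> : (fun x => f x - f x) = (fun x => 0 * f x).
  by apply: funext => x; rewrite subrr mul0r.
by rewrite qZ // normr0 mul0r.
Qed.

Lemma Ac_open_ball f (a r : K) : A f -> Ac_open A S [set psi | `|psi f - a| < r].
Proof.
move=> Af phi phi_f; exists [set f], (r - `|phi f - a|).
split.
- exact: precompact_set1.
- by rewrite subr_gt0.
- move=> psi /(_ f erefl) psi_f /=.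
  by rewrite (le_lt_trans (ler_distD (phi f) _ _)) // -ltrBrDr.
Qed.

Lemma Ac_open_bigcup (I : Type) (D : set I) (O : I -> set ((X -> K) -> K)) :
  (forall i, D i -> Ac_open A S (O i)) -> Ac_open A S (\bigcup_(i in D) O i).
Proof.
move=> O_open phi [i Di Oi_phi].
have [B [eps [pB eps_gt0 ball_sub]]] := O_open i Di phi Oi_phi.
by exists B, eps; split=> // psi /ball_sub; exists i.
Qed.

Lemma delta_continuous_character x : continuous_character A S (delta x).
Proof.
split=> //; have [n [ps [C [Sps bound]]]] := hinc (@compact_set1 X x).
by exists n, ps, C; split=> // f Af; exact: bound.
Qed.

Hypothesis hsep : separates_compact_closed A.

Lemma delta_injective : hausdorff_space X ->
  forall x y, (forall f, A f -> delta x f = delta y f) -> x = y.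
Proof.
move=> hX x y xy_eq; apply: contrapT => x_neq_y.
have y_closed : closed [set y] := compact_closed hX (@compact_set1 X y).
have [|f [Af _ f1 f0]] := hsep (@compact_set1 X x) y_closed.
  by apply/seteqP; split=> // z [/= -> ].
by move: (xy_eq f Af); rewrite /delta f1 // f0 // => /eqP; rewrite oner_eq0.
Qed.

Lemma delta_open_onto_image U : open U ->
  exists O, Ac_open A S O /\ @delta X K @^-1` O = U.
Proof.
move=> oU; pose D := [set f | A f /\ forall y, ~ U y -> f y = 0].
exists (\bigcup_(f in D) [set psi | `|psi f - 1| < 1]); split.
  by apply: Ac_open_bigcup => f [Af _]; exact: Ac_open_ball.
apply/seteqP; split=> [y [f [_ f0]]|y Uy].
  rewrite /= /delta => f_near1; apply: contrapT => /f0 fy0.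
  by move: f_near1; rewrite fy0 sub0r normrN normr1 ltxx.
have [|f [Af _ f1 f0]] := hsep (@compact_set1 X y) (open_closedC oU).
  by apply/seteqP; split=> // z [/= -> ].
exists f; first by split=> // z /f0.
by rewrite /= /delta f1 // subrr normr0 ltr01.
Qed.

Variable conj : K -> K.
Hypothesis mul_conj_ge0 : forall z, 0 <= z * conj z.
Hypothesis mul_conj_neq0 : forall z, z != 0 -> z * conj z != 0.
Hypothesis hsa : self_adjoint conj A.

Lemma character_kernel_nonneg_witness phi x :
  continuous_character A S phi -> ~ (forall f, A f -> phi f = delta x f) ->
  exists h, [/\ A h, phi h = 0, (forall y, 0 <= h y) & h x != 0].
Proof.
move=> hphi not_delta.
have [f Af phif_neq] : exists2 f, A f & phi f != f x.
  apply: contrapT => no_f; apply: not_delta => f Af.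
  by apply: contrapT => phif_neq; apply: no_f; exists f => //; apply/eqP.
pose g y := f y - phi f.
have Ag : A g := unital_subalgebra_sub hA Af (unital_subalgebra_cst hA (phi f)).
have phig : phi g = 0.
  rewrite (character_sub hA hphi Af (unital_subalgebra_cst hA _)).
  by rewrite (character_cst hA hphi) subrr.
case: hA => _ _ _ _ AM; case: hphi => _ _ phiM _ _.
exists (fun y => g y * conj (g y)); split=> //.
- by apply: AM => //; exact: hsa.
- by rewrite phiM ?phig ?mul0r //; exact: hsa.
- by apply: mul_conj_neq0; rewrite /g subr_eq0 eq_sym.
Qed.

Lemma continuous_character_is_delta : full A -> compactly_localized A S ->
  forall phi, continuous_character A S phi ->
    exists x, forall f, A f -> phi f = delta x f.
Proof.
move=> hfull hloc phi hphi.
have [Kc [cK phi_loc]] := hloc _ (character_norm_tau_continuous hphi).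
apply: contrapT => /forallNP not_delta.
have [_ A1 AD _ _] := hA; have [phiD _ _ _ _] := hphi.
have Acont : forall f, A f -> continuous f by case: hA.
pose C := [set h | [/\ A h, phi h = 0 & forall y, 0 <= h y]].
have [H [AH phiH H_ge0] H_Kc] : exists2 H, C H & forall y, Kc y -> H y != 0.
  apply: contrapT => noH.
  have [x Kx Cx0] : exists2 x, Kc x & forall h, C h -> h x = 0.
    apply: (compact_common_zero cK).
    - by split=> //; [exact: unital_subalgebra_cst | exact: (character_cst hA hphi)].
    - move=> f g [Af phif f_ge0] [Ag phig g_ge0]; split=> [||y]; first exact: AD.
        by rewrite phiD // phif phig addr0.
      by rewrite addr_ge0.
    - by move=> f [Af _ _]; exact: Acont.
    - by move=> f [].
    - move=> h Ch; apply: contrapT => h_ne0; apply: noH; exists h => // y Ky.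
      by apply/eqP => hy0; apply: h_ne0; exists y.
  have [h [Ah phih h_ge0]] := character_kernel_nonneg_witness hphi (not_delta x).
  by rewrite Cx0 ?eqxx.
have [|e [Ae e01 e1 e0]] := hsep cK (closed_zero_set (Acont _ AH)).
  by apply/seteqP; split=> // y [/H_Kc/eqP].
pose u y := 1 - e y.
have Au : A u := unital_subalgebra_sub hA A1 Ae.
have phiu : phi u = 0.
  by apply/normr0_eq0; apply: phi_loc => // y Ky; rewrite /u e1 // subrr.
have [|y /eqP] := character_kernel_has_zero hphi hfull (AD _ _ AH Au).
  by rewrite phiD // phiH phiu addr0.
have /andP[e_ge0 e_le1] := e01 y.
rewrite paddr_eq0 ?subr_ge0 // => /andP[/eqP Hy0].
by rewrite /u e0 // subr0 oner_eq0.
Qed.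

End DeltaMap.

Lemma theorem6p13_for_conj (K : numFieldType) (conj : K -> K) :
  (forall z, 0 <= z * conj z) -> (forall z, z != 0 -> z * conj z != 0) ->
  theorem6p13_for conj.
Proof.
move=> conj_ge0 conj_neq0 X A S hX hk hA hfull hsa S_seminorm hinc hsep; split.
- exact: delta_continuous_character.
- exact: delta_injective.
- exact: delta_continuous.
- exact: delta_open_onto_image.
- exact: continuous_character_is_delta.
Qed.

Theorem theorem6p13 :
  (forall R : realType, @theorem6p13_for (R : numFieldType) id) /\
  (forall R : realType,
     @theorem6p13_for (R[i] : numFieldType) (fun z : R[i] => z^*)).
Proof.
split=> R; apply: theorem6p13_for_conj => z.
- by rewrite -expr2 sqr_ge0.
- by move=> z_neq0; rewrite mulf_neq0.
- exact: mul_conjC_ge0.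
- by rewrite mul_conjC_eq0.
Qed.
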